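(* Let $g,h$ be non-identical monotone linear functions. Then: (i) $\theta(h)-\theta(g)\in(0,\pi)_{2\pi}$ $\iff$ $\theta(h\circ g)\in(\theta(g),\theta(h))_{2\pi}$ $\iff$ $\theta(g\circ h)\in(\theta(g),\theta(h))_{2\pi}$. (ii) $\theta(h)-\theta(g)\in\{0,\pi\}_{2\pi}$ $\iff$ $\theta(h\circ g)\in\{\theta(g),\theta(h),\bot\}$ $\iff$ $\theta(g\circ h)\in\{\theta(g),\theta(h),\bot\}$. (iii) If $\theta(h)=\theta(g)$ then $\theta(h\circ g)=\theta(g\circ h)=\theta(h)$. (iv) $\theta(h\circ g)=\bot\iff\theta(g\circ h)=\bot$, and either of these implies $\theta(h)-\theta(g)=_{2\pi}\pi$.
   Context: A linear function is $f(x)=ax+b$, $a,b\in\mathbb{R}$; it is monotone if $a>0$ and identical if $f(x)=x$. The vector of $f$ is $\vec f=(b,1-a)^\top$ and $\theta(f)\in[0,2\pi)$ is its polar angle, with $\theta(f)=\bot$ if $\vec f=0$. $\theta_1=_{2\pi}\theta_2$ means $\theta_1-\theta_2\in2\pi\mathbb{Z}$; $(\theta_1,\theta_2)_{2\pi}=\{\theta\in(\lambda_1,\lambda_2)\mid\lambda_1=_{2\pi}\theta_1,\lambda_2=_{2\pi}\theta_2,\lambda_2-\lambda_1\in[0,2\pi)\}$; for a set $S$, $S_{2\pi}=\{\theta\mid\theta=_{2\pi}\lambda,\ \lambda\in S\}$. *)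

From Stdlib Require Import Reals Lra.
Open Scope R_scope.

Record linfun := LinFun { lf_a : R; lf_b : R }.

Definition lf_eval (f : linfun) (x : R) : R := lf_a f * x + lf_b f.

Definition monotone (f : linfun) : Prop := 0 < lf_a f.

Definition identical (f : linfun) : Prop := forall x, lf_eval f x = x.

Definition lf_comp (h g : linfun) : linfun :=
  LinFun (lf_a h * lf_a g) (lf_a h * lf_b g + lf_b h).

Lemma lf_comp_eval h g x : lf_eval (lf_comp h g) x = lf_eval h (lf_eval g x).
Proof. unfold lf_eval, lf_comp; simpl; ring. Qed.

Definition polar_angle (x y : R) : R :=
  let r := sqrt (x * x + y * y) in
  if Rle_dec 0 y then acos (x / r) else 2 * PI - acos (x / r).

(* theta(f) : the polar angle of vec f = (b, 1 - a); None stands for bottom *)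
Definition theta (f : linfun) : option R :=
  let x := lf_b f in let y := 1 - lf_a f in
  if Req_dec_T x 0 then (if Req_dec_T y 0 then None else Some (polar_angle x y))
  else Some (polar_angle x y).

Definition eq2pi (t1 t2 : R) : Prop := exists k : Z, t1 - t2 = 2 * PI * IZR k.

Definition open_arc (t1 t2 : R) (t : R) : Prop :=
  exists l1 l2, eq2pi l1 t1 /\ eq2pi l2 t2 /\ 0 <= l2 - l1 < 2 * PI /\ l1 < t < l2.

Definition mod2pi (S : R -> Prop) (t : R) : Prop := exists l, S l /\ eq2pi t l.

(* The vector of [h \o g] is [a_h * vec g + vec h] and that of [g \o h] is
   [vec g + a_g * vec h]; for monotone g and h both are positive combinations
   [w = p u + q v] of [u = vec g] and [v = vec h].  Writing u, v in polar form,
   the cross products of w with u and with v are [q sin (th - tg)] and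
   [p sin (th - tg)] times positive radii, so the sign of [sin (th - tg)]
   decides whether the angle of w lies strictly between [tg] and [th].  When
   [sin (th - tg) = 0] the vectors are parallel or antiparallel, and w is a
   multiple of u whose sign (or vanishing) is read off directly. *)

From Stdlib Require Import Reals Lra Lia ZArith.
Open Scope R_scope.

Lemma sin_cos_period_Z (x : R) (k : Z) :
  sin (x + 2 * PI * IZR k) = sin x /\ cos (x + 2 * PI * IZR k) = cos x.
Proof.
  destruct (Z_le_gt_dec 0 k) as [Hk | Hk].
  - rewrite <- (Z2Nat.id k Hk), <- INR_IZR_INZ.
    replace (x + 2 * PI * INR (Z.to_nat k)) with (x + 2 * INR (Z.to_nat k) * PI) by ring.
    now rewrite sin_period, cos_period.
  - set (y := x + 2 * PI * IZR k).
    replace x with (y + 2 * INR (Z.to_nat (- k)) * PI)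
      by (rewrite INR_IZR_INZ, Z2Nat.id, opp_IZR by lia; unfold y; ring).
    now rewrite sin_period, cos_period.
Qed.

Lemma eq2pi_sin_cos a b : eq2pi a b -> sin a = sin b /\ cos a = cos b.
Proof.
  intros [k Hk]. replace a with (b + 2 * PI * IZR k) by lra. apply sin_cos_period_Z.
Qed.

Lemma eq2pi_repr x : exists d, 0 <= d < 2 * PI /\ eq2pi x d.
Proof.
  pose proof PI_RGT_0.
  set (r := x / (2 * PI)).
  assert (Hx : x = 2 * PI * r) by (unfold r; field; lra).
  destruct (archimed r) as [Hup1 Hup2].
  exists (x - 2 * PI * IZR (up r - 1)). split.
  - rewrite minus_IZR, Hx. split; nra.
  - exists (up r - 1)%Z. ring.
Qed.

Lemma eq2pi_0_2PI_eq a b : 0 <= a < 2 * PI -> 0 <= b < 2 * PI -> eq2pi a b -> a = b.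
Proof.
  intros Ha Hb [k Hk]. pose proof PI_RGT_0.
  assert (Hk1 : IZR k < 1) by nra.
  assert (Hk2 : -1 < IZR k) by nra.
  apply lt_IZR in Hk1. apply lt_IZR in Hk2.
  replace k with 0%Z in Hk by lia. lra.
Qed.

Lemma sin_pos_0_2PI x : 0 <= x < 2 * PI -> (0 < sin x <-> 0 < x < PI).
Proof.
  intros Hx. split.
  - intros Hs. destruct (Rle_lt_dec PI x) as [HPI | HPI].
    + pose proof (sin_le_0 x HPI ltac:(lra)). lra.
    + destruct (Req_dec x 0) as [-> | Hx0]; [rewrite sin_0 in Hs |]; lra.
  - intros [Hx1 Hx2]. exact (sin_gt_0 x Hx1 Hx2).
Qed.

Lemma mod2pi_0_PI x : mod2pi (fun l => l = 0 \/ l = PI) x <-> sin x = 0.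
Proof.
  split.
  - intros (l & Hl & Hxl). rewrite (proj1 (eq2pi_sin_cos _ _ Hxl)).
    destruct Hl as [-> | ->]; [apply sin_0 | apply sin_PI].
  - intros Hs. destruct (eq2pi_repr x) as (d & Hd & Hxd).
    rewrite (proj1 (eq2pi_sin_cos _ _ Hxd)) in Hs.
    exists d. split; [| exact Hxd].
    destruct (sin_eq_O_2PI_0 d) as [? | [? | ?]]; auto; lra.
Qed.

Lemma sin_sub_eq0_cases a b : 0 <= a < 2 * PI -> 0 <= b < 2 * PI ->
  sin (b - a) = 0 -> b = a \/ eq2pi (b - a) PI.
Proof.
  intros Ha Hb Hs. apply mod2pi_0_PI in Hs as (l & [-> | ->] & [k Hk]); [left | right].
  - apply eq2pi_0_2PI_eq; auto. exists k. lra.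
  - exists k. exact Hk.
Qed.

Lemma eq2pi_PI_antipodal a b : eq2pi (b - a) PI -> cos b = - cos a /\ sin b = - sin a.
Proof.
  intros Hab. destruct (eq2pi_sin_cos _ _ Hab) as [Hs Hc].
  rewrite sin_PI in Hs. rewrite cos_PI in Hc.
  replace b with (a + (b - a)) by ring.
  rewrite cos_plus, sin_plus, Hs, Hc. split; ring.
Qed.

Lemma cos_sin_inj_0_2PI a b : 0 <= a < 2 * PI -> 0 <= b < 2 * PI ->
  cos a = cos b -> sin a = sin b -> a = b.
Proof.
  intros Ha Hb Hc Hs.
  assert (Hsin : sin (b - a) = 0) by (rewrite sin_minus, Hc, Hs; ring).
  destruct (sin_sub_eq0_cases a b Ha Hb Hsin) as [-> | Hab]; [reflexivity |].
  destruct (eq2pi_PI_antipodal a b Hab) as [Hc' Hs'].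
  exfalso. apply (cos_sin_0 a). split; lra.
Qed.

Lemma open_arc_iff a b t d e :
  0 <= d < 2 * PI -> eq2pi (b - a) d -> 0 <= e < 2 * PI -> eq2pi (t - a) e ->
  (open_arc a b t <-> 0 < e < d).
Proof.
  intros Hd [kd Hkd] He [ke Hke]. split.
  - intros (l1 & l2 & [k1 H1] & [k2 H2] & H12 & Hl).
    assert (Ed : l2 - l1 = d).
    { apply eq2pi_0_2PI_eq; auto. exists (k2 - k1 + kd)%Z.
      rewrite plus_IZR, minus_IZR. lra. }
    assert (Ee : t - l1 = e).
    { apply eq2pi_0_2PI_eq; [lra | auto |]. exists (ke - k1)%Z.
      rewrite minus_IZR. lra. }
    lra.
  - intros He'. exists (t - e), (t - e + d). repeat split; try lra.
    + exists ke. lra.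
    + exists (ke - kd)%Z. rewrite minus_IZR. lra.
Qed.

Lemma open_arc_0_PI x : open_arc 0 PI x <-> 0 < sin x.
Proof.
  pose proof PI_RGT_0.
  destruct (eq2pi_repr (x - 0)) as (e & He & Hxe).
  rewrite (open_arc_iff 0 PI x PI e ltac:(lra) ltac:(exists 0%Z; lra) He Hxe).
  replace (x - 0) with x in Hxe by ring.
  rewrite (proj1 (eq2pi_sin_cos _ _ Hxe)), sin_pos_0_2PI by exact He. tauto.
Qed.

Lemma in_arc_iff_sin_pos d e : 0 <= d < 2 * PI -> 0 <= e < 2 * PI ->
  (0 < sin e <-> 0 < sin d) -> (0 < sin (d - e) <-> 0 < sin d) ->
  (0 < e < d <-> 0 < sin d).
Proof.
  intros Hd He Hed Hdd. rewrite (sin_pos_0_2PI d Hd), (sin_pos_0_2PI e He) in *. split.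
  - intros Hed'. destruct (Rlt_le_dec d PI) as [| HdPI]; [lra | exfalso].
    assert (e >= PI).
    { destruct (Rlt_le_dec e PI); [| lra]. assert (0 < d < PI) by (apply Hed; lra). lra. }
    assert (Hsde : ~ 0 < sin (d - e)) by (rewrite Hdd; intros [_ ?]; lra).
    rewrite sin_pos_0_2PI in Hsde by lra. lra.
  - intros Hsd. split; [tauto |].
    destruct (Rlt_le_dec e d) as [| Hde]; [assumption | exfalso].
    pose proof (sin_ge_0 (e - d) ltac:(lra) ltac:(lra)).
    replace (d - e) with (- (e - d)) in Hdd by ring. rewrite sin_neg in Hdd.
    assert (0 < - sin (e - d)) by (apply Hdd; exact Hsd). lra.
Qed.

Lemma polar_angle_spec x y : ~ (x = 0 /\ y = 0) ->
  exists r, 0 < r /\ 0 <= polar_angle x y < 2 * PI /\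
    x = r * cos (polar_angle x y) /\ y = r * sin (polar_angle x y).
Proof.
  intros Hxy. pose proof PI_RGT_0.
  set (r := sqrt (x * x + y * y)).
  assert (Hr : 0 < r).
  { apply sqrt_lt_R0. destruct (Req_dec x 0); [assert (y <> 0) by tauto |]; nra. }
  assert (Hr2 : r * r = x * x + y * y) by (apply sqrt_sqrt; nra).
  set (c := x / r).
  assert (Hx : x = r * c) by (unfold c; field; lra).
  assert (Hc : -1 <= c <= 1).
  { assert (c * c <= 1) by (apply (Rmult_le_reg_r (r * r)); nra). split; nra. }
  assert (Hsin : sqrt (1 - c²) = Rabs y / r).
  { replace (1 - c²) with ((y / r)²)
      by (unfold Rsqr, c; field_simplify_eq; lra).
    rewrite sqrt_Rsqr_abs. unfold Rdiv.
    rewrite Rabs_mult, Rabs_inv, (Rabs_right r) by lra. reflexivity. }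
  exists r. unfold polar_angle. fold r. fold c.
  pose proof (acos_bound c).
  destruct (Rle_dec 0 y) as [Hy | Hy].
  - rewrite cos_acos, sin_acos, Hsin, Rabs_right by lra.
    repeat split; try lra. field. lra.
  - assert (Hacos : 0 < acos c).
    { destruct (Req_dec (acos c) 0) as [Hc0 | ]; [| lra].
      assert (c = 1) by (rewrite <- (cos_acos c Hc), Hc0; apply cos_0).
      assert (y * y = 0) by nra. nra. }
    rewrite cos_minus, sin_minus, cos_2PI, sin_2PI, cos_acos, sin_acos, Hsin, Rabs_left
      by lra.
    repeat split; try lra. field. lra.
Qed.

Definition vec_angle (x y : R) : option R :=
  if Req_dec_T x 0 then (if Req_dec_T y 0 then None else Some (polar_angle x y))
  else Some (polar_angle x y).

Lemma theta_vec_angle f : theta f = vec_angle (lf_b f) (1 - lf_a f).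
Proof. reflexivity. Qed.

Lemma vec_angle_None_iff x y : vec_angle x y = None <-> x = 0 /\ y = 0.
Proof.
  unfold vec_angle.
  destruct (Req_dec_T x 0), (Req_dec_T y 0); split; intros H; try discriminate; tauto.
Qed.

Lemma vec_angle_nonzero x y : ~ (x = 0 /\ y = 0) -> vec_angle x y = Some (polar_angle x y).
Proof. unfold vec_angle. destruct (Req_dec_T x 0), (Req_dec_T y 0); tauto. Qed.

Lemma vec_angle_Some_iff x y t : vec_angle x y = Some t <->
  exists r, 0 < r /\ 0 <= t < 2 * PI /\ x = r * cos t /\ y = r * sin t.
Proof.
  split.
  - intros Ht. assert (Hxy : ~ (x = 0 /\ y = 0)) by (rewrite <- vec_angle_None_iff; congruence).
    rewrite vec_angle_nonzero in Ht by exact Hxy. injection Ht as <-.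
    exact (polar_angle_spec x y Hxy).
  - intros (r & Hr & Ht & Hx & Hy).
    assert (Hxy : ~ (x = 0 /\ y = 0)).
    { intros [Hx0 Hy0]. apply (cos_sin_0 t). split; nra. }
    rewrite vec_angle_nonzero by exact Hxy. f_equal.
    destruct (polar_angle_spec x y Hxy) as (r' & Hr' & Ht' & Hx' & Hy').
    set (t' := polar_angle x y) in *.
    assert (Hrr : r = r').
    { assert (Hsq : r * r = r' * r').
      { transitivity (x * x + y * y).
        - rewrite Hx, Hy, <- (Rmult_1_r (r * r)), <- (sin2_cos2 t). unfold Rsqr. ring.
        - rewrite Hx', Hy', <- (Rmult_1_r (r' * r')), <- (sin2_cos2 t'). unfold Rsqr. ring. }
      nra. }
    subst r'. apply cos_sin_inj_0_2PI; auto.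
    + apply (Rmult_eq_reg_l r); lra.
    + apply (Rmult_eq_reg_l r); lra.
Qed.

Definition sum_angle (p q tg th : R) : option R :=
  vec_angle (p * cos tg + q * cos th) (p * sin tg + q * sin th).

Section SumAngle.

Variables p q tg th : R.
Hypotheses (Hp : 0 < p) (Hq : 0 < q) (Htg : 0 <= tg < 2 * PI) (Hth : 0 <= th < 2 * PI).

Lemma sum_angle_Some_sin tw : sum_angle p q tg th = Some tw ->
  exists rw, 0 < rw /\ 0 <= tw < 2 * PI /\
    rw * sin (tw - tg) = q * sin (th - tg) /\ rw * sin (th - tw) = p * sin (th - tg).
Proof.
  unfold sum_angle. rewrite vec_angle_Some_iff. intros (rw & Hrw & Htw & Hx & Hy).
  exists rw. split; [exact Hrw |]. split; [exact Htw |]. rewrite !sin_minus. split.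
  - transitivity (cos tg * (rw * sin tw) - sin tg * (rw * cos tw)); [ring |].
    rewrite <- Hx, <- Hy. ring.
  - transitivity ((rw * cos tw) * sin th - (rw * sin tw) * cos th); [ring |].
    rewrite <- Hx, <- Hy. ring.
Qed.

Lemma sum_angle_None_sin : sum_angle p q tg th = None -> sin (th - tg) = 0.
Proof.
  unfold sum_angle. rewrite vec_angle_None_iff. intros [Hx Hy].
  apply (Rmult_eq_reg_l q); [| lra]. rewrite sin_minus.
  transitivity (cos tg * (p * sin tg + q * sin th) - sin tg * (p * cos tg + q * cos th));
    [ring |].
  rewrite Hx, Hy. ring.
Qed.

Lemma sum_angle_same : th = tg -> sum_angle p q tg th = Some th.
Proof.
  intros <-. unfold sum_angle. apply vec_angle_Some_iff.
  exists (p + q). repeat split; (lra || ring).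
Qed.

Lemma sum_angle_antipodal : eq2pi (th - tg) PI ->
  sum_angle p q tg th = Some tg \/ sum_angle p q tg th = Some th \/
  sum_angle p q tg th = None.
Proof.
  intros Hpi. destruct (eq2pi_PI_antipodal tg th Hpi) as [Hc Hs].
  unfold sum_angle. rewrite !vec_angle_Some_iff, vec_angle_None_iff, Hc, Hs.
  destruct (Rtotal_order p q) as [Hpq | [<- | Hpq]].
  - right; left. exists (q - p). repeat split; (lra || ring).
  - right; right. split; ring.
  - left. exists (p - q). repeat split; (lra || ring).
Qed.

Lemma sum_angle_arc_iff tw : sum_angle p q tg th = Some tw ->
  (open_arc tg th tw <-> 0 < sin (th - tg)).
Proof.
  intros Hw. destruct (sum_angle_Some_sin tw Hw) as (rw & Hrw & Htw & Hu & Hv).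
  destruct (eq2pi_repr (th - tg)) as (d & Hd & [kd Hkd]).
  destruct (eq2pi_repr (tw - tg)) as (e & He & [ke Hke]).
  rewrite (open_arc_iff tg th tw d e Hd (ex_intro _ kd Hkd) He (ex_intro _ ke Hke)).
  assert (Hde : eq2pi (th - tw) (d - e)) by (exists (kd - ke)%Z; rewrite minus_IZR; lra).
  rewrite (proj1 (eq2pi_sin_cos _ _ (ex_intro _ kd Hkd))) in Hu, Hv |- *.
  rewrite (proj1 (eq2pi_sin_cos _ _ (ex_intro _ ke Hke))) in Hu.
  rewrite (proj1 (eq2pi_sin_cos _ _ Hde)) in Hv.
  apply in_arc_iff_sin_pos; try assumption; split; intros; nra.
Qed.

Lemma sum_angle_in_arc :
  (exists t, sum_angle p q tg th = Some t /\ open_arc tg th t) <-> 0 < sin (th - tg).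
Proof.
  split.
  - intros (t & Ht & Harc). exact (proj1 (sum_angle_arc_iff t Ht) Harc).
  - intros Hs. destruct (sum_angle p q tg th) as [t |] eqn:Ht.
    + exists t. split; [reflexivity |]. exact (proj2 (sum_angle_arc_iff t Ht) Hs).
    + rewrite sum_angle_None_sin in Hs by exact Ht. lra.
Qed.

Lemma sum_angle_endpoint :
  (sum_angle p q tg th = Some tg \/ sum_angle p q tg th = Some th \/
   sum_angle p q tg th = None) <-> sin (th - tg) = 0.
Proof.
  split.
  - intros [Hw | [Hw | Hw]].
    + destruct (sum_angle_Some_sin _ Hw) as (rw & _ & _ & Hu & _).
      rewrite Rminus_diag, sin_0, Rmult_0_r in Hu. apply (Rmult_eq_reg_l q); lra.
    + destruct (sum_angle_Some_sin _ Hw) as (rw & _ & _ & _ & Hv).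
      rewrite Rminus_diag, sin_0, Rmult_0_r in Hv. apply (Rmult_eq_reg_l p); lra.
    + exact (sum_angle_None_sin Hw).
  - intros Hs. destruct (sin_sub_eq0_cases tg th Htg Hth Hs) as [Heq | Hpi].
    + right; left. exact (sum_angle_same Heq).
    + exact (sum_angle_antipodal Hpi).
Qed.

Lemma sum_angle_None_antipodal : sum_angle p q tg th = None -> eq2pi (th - tg) PI.
Proof.
  intros Hw. destruct (sin_sub_eq0_cases tg th Htg Hth (sum_angle_None_sin Hw))
    as [Heq | Hpi]; [| exact Hpi].
  rewrite sum_angle_same in Hw by exact Heq. discriminate.
Qed.

Lemma sum_angle_classification :
  ((exists t, sum_angle p q tg th = Some t /\ open_arc tg th t) <-> 0 < sin (th - tg)) /\
  ((sum_angle p q tg th = Some tg \/ sum_angle p q tg th = Some th \/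
    sum_angle p q tg th = None) <-> sin (th - tg) = 0) /\
  (th = tg -> sum_angle p q tg th = Some th) /\
  (sum_angle p q tg th = None -> eq2pi (th - tg) PI).
Proof.
  split; [exact sum_angle_in_arc |].
  split; [exact sum_angle_endpoint |].
  split; [exact sum_angle_same | exact sum_angle_None_antipodal].
Qed.

End SumAngle.

Lemma theta_Some_range f t : theta f = Some t -> 0 <= t < 2 * PI.
Proof. rewrite theta_vec_angle, vec_angle_Some_iff. intros (r & _ & Ht & _). exact Ht. Qed.

Lemma theta_comp_None_comm h g : theta (lf_comp h g) = None -> theta (lf_comp g h) = None.
Proof.
  destruct h as [ah bh], g as [ag bg].
  rewrite !theta_vec_angle, !vec_angle_None_iff. simpl. intros [Hb Ha].
  split; [| lra].
  transitivity (ag * (ah * bg + bh) + bg * (1 - ah * ag)); [ring |].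
  rewrite Hb, Ha. ring.
Qed.

Lemma theta_comp_sum_angle g h tg th : theta g = Some tg -> theta h = Some th ->
  exists rg rh, 0 < rg /\ 0 < rh /\
    theta (lf_comp h g) = sum_angle (lf_a h * rg) rh tg th /\
    theta (lf_comp g h) = sum_angle rg (lf_a g * rh) tg th.
Proof.
  destruct g as [ag bg], h as [ah bh].
  rewrite !theta_vec_angle, !vec_angle_Some_iff. simpl.
  intros (rg & Hrg & _ & Hbg & Hag) (rh & Hrh & _ & Hbh & Hah).
  exists rg, rh. split; [exact Hrg |]. split; [exact Hrh |].
  unfold sum_angle.
  split; f_equal.
  - rewrite Hbg, Hbh. ring.
  - replace (1 - ah * ag) with (ah * (1 - ag) + (1 - ah)) by ring. rewrite Hag, Hah. ring.
  - rewrite Hbg, Hbh. ring.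
  - replace (1 - ag * ah) with ((1 - ag) + ag * (1 - ah)) by ring. rewrite Hag, Hah. ring.
Qed.

Theorem mainTheorem7 (g h : linfun) (tg th : R) :
  monotone g -> monotone h -> ~ identical g -> ~ identical h ->
  theta g = Some tg -> theta h = Some th ->
  (* (i) *)
  ((open_arc 0 PI (th - tg) <->
      exists t, theta (lf_comp h g) = Some t /\ open_arc tg th t) /\
   ((exists t, theta (lf_comp h g) = Some t /\ open_arc tg th t) <->
      exists t, theta (lf_comp g h) = Some t /\ open_arc tg th t)) /\
  (* (ii) *)
  ((mod2pi (fun l => l = 0 \/ l = PI) (th - tg) <->
      (theta (lf_comp h g) = Some tg \/ theta (lf_comp h g) = Some th \/
       theta (lf_comp h g) = None)) /\
   ((theta (lf_comp h g) = Some tg \/ theta (lf_comp h g) = Some th \/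
       theta (lf_comp h g) = None) <->
      (theta (lf_comp g h) = Some tg \/ theta (lf_comp g h) = Some th \/
       theta (lf_comp g h) = None))) /\
  (* (iii) *)
  (th = tg -> theta (lf_comp h g) = Some th /\ theta (lf_comp g h) = Some th) /\
  (* (iv) *)
  ((theta (lf_comp h g) = None <-> theta (lf_comp g h) = None) /\
   (theta (lf_comp h g) = None -> eq2pi (th - tg) PI) /\
   (theta (lf_comp g h) = None -> eq2pi (th - tg) PI)).
Proof.
  (* Non-identity is already implied by [theta g = Some tg] and [theta h = Some th]. *)
  intros Hg Hh _ _ Htg Hth.
  pose proof (theta_comp_None_comm h g). pose proof (theta_comp_None_comm g h).
  destruct (theta_comp_sum_angle g h tg th Htg Hth) as (rg & rh & Hrg & Hrh & Ehg & Egh).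
  rewrite Ehg, Egh in *.
  pose proof (theta_Some_range g tg Htg) as Rg. pose proof (theta_Some_range h th Hth) as Rh.
  destruct (sum_angle_classification (lf_a h * rg) rh tg th
              ltac:(apply Rmult_lt_0_compat; assumption) Hrh Rg Rh) as (A1 & A2 & A3 & A4).
  destruct (sum_angle_classification rg (lf_a g * rh) tg th
              Hrg ltac:(apply Rmult_lt_0_compat; assumption) Rg Rh) as (B1 & B2 & B3 & B4).
  rewrite open_arc_0_PI, mod2pi_0_PI.
  tauto.
Qed.
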